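(* Let $\rho_{ABC}\in M_2(\mathbb{C})\otimes M_2(\mathbb{C})\otimes M_2(\mathbb{C})$ be a three-qubit state with $\mathrm{rank}(\rho_{ABC})=3$. Let $\{P_{a|0}\}_{a=0}^1,\{P_{a|1}\}_{a=0}^1$ be two nontrivial projective measurements on subsystem $A$ and $\{Q_{b|0}\}_{b=0}^1,\{Q_{b|1}\}_{b=0}^1$ two nontrivial projective measurements on subsystem $B$ that are different up to relabeling. Define $\sigma_{ab|xy}=\mathrm{Tr}_{AB}\big((P_{a|x}\otimes Q_{b|y}\otimes\mathbb{1})\rho_{ABC}\big)$ for $a,b,x,y\in\{0,1\}$. Then neither of the following two rank patterns can occur: (1) $\mathrm{rank}(\sigma_{ab|00})=1$ and $\mathrm{rank}(\sigma_{ab|11})=1$ for all $a,b$, while $\mathrm{rank}(\sigma_{ab|01})=\mathrm{rank}(\sigma_{ab|10})=2$ for all $a,b$; (2) for all $a,y\in\{0,1\}$: $\mathrm{rank}(\sigma_{a0|0y})=1$, $\mathrm{rank}(\sigma_{a1|0y})=2$, $\mathrm{rank}(\sigma_{a0|1y})=2$ and $\mathrm{rank}(\sigma_{a1|1y})=1$.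
   Context: A nontrivial projective measurement on $\mathbb{C}^2$ is a pair $\{P_0,P_1\}$ of rank-one orthogonal projections with $P_0+P_1=\mathbb{1}$. Two such measurements $\{Q_{b|0}\}_{b=0}^1,\{Q_{b|1}\}_{b=0}^1$ are ''different up to relabeling'' if $Q_{0|0}\ne Q_{0|1}$ and $Q_{0|0}\ne Q_{1|1}$. *)

From HB Require Import structures.
From mathcomp Require Import all_boot all_order all_algebra.
From mathcomp Require Import complex mxtens.
From mathcomp Require Import reals.
Set Implicit Arguments. Unset Strict Implicit. Unset Printing Implicit Defensive.
Import Order.TTheory GRing.Theory Num.Theory.
Local Open Scope ring_scope.

Definition adjmx {C : numClosedFieldType} {m n : nat} (A : 'M[C]_(m, n)) : 'M[C]_(n, m) :=
  (map_mx Num.conj A)^T.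

Definition psd {C : numClosedFieldType} {n : nat} (A : 'M[C]_n) : Prop :=
  adjmx A = A /\ forall v : 'cV[C]_n, 0 <= (adjmx v *m A *m v) 0 0.

(* a three-qubit state (density matrix) on C^2 (x) C^2 (x) C^2, ordered A, B, C *)
Definition density_matrix {C : numClosedFieldType} (rho : 'M[C]_(2 * 2 * 2)) : Prop :=
  psd rho /\ \tr rho = 1.

Definition rank_one_proj {C : numClosedFieldType} (P : 'M[C]_2) : Prop :=
  P *m P = P /\ adjmx P = P /\ \rank P = 1%N.

Definition nontrivial_pm {C : numClosedFieldType} (P : 'I_2 -> 'M[C]_2) : Prop :=
  rank_one_proj (P 0) /\ rank_one_proj (P 1) /\ P 0 + P 1 = 1%:M.

Definition different_up_to_relabeling {C : numClosedFieldType}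
  (Q : 'I_2 -> 'I_2 -> 'M[C]_2) : Prop :=
  Q 0 0 <> Q 0 1 /\ Q 0 0 <> Q 1 1.
(* Q b y = Q_{b|y} *)

(* partial trace over the first (4-dimensional, AB) factor of C^4 (x) C^2 *)
Definition ptraceAB {C : numClosedFieldType} (M : 'M[C]_(2 * 2 * 2)) : 'M[C]_2 :=
  \matrix_(i, j) \sum_(k < 2 * 2) M (mxtens_index (k, i)) (mxtens_index (k, j)).

Definition assemblage {C : numClosedFieldType} (rho : 'M[C]_(2 * 2 * 2))
  (P Q : 'I_2 -> 'I_2 -> 'M[C]_2) (a b x y : 'I_2) : 'M[C]_2 :=
  ptraceAB (((P a x *t Q b y) *t (1%:M : 'M[C]_2)) *m rho).

(* Write each rank-one projection as s u^* u.  Then g is in the left kernel of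
   sigma_{ab|xy} iff p ⊗ q ⊗ g is in the left kernel K of rho (rho is positive),
   so rank 1 means that K contains such a vector with g <> 0, and rank 2 that it
   does not; and K has dimension 8 - 3 = 5.  For b in C^2 let X(b) be the space
   of x in C^2_A ⊗ C^2_C such that x with b inserted at B lies in K; for
   independent b, b' these two images in K are independent.  Both patterns give
   a vector b0 and a basis b1, b1' of B such that both outcomes p0, p1 of one
   A-measurement are singular at b0, so dim X(b0) >= 2, while both outcomes
   r0, r1 of the other are singular at b1 and at b1' but p0 is not, so X(b1) and
   X(b1') are planes spanned by vectors r0 ⊗ g, r1 ⊗ h.  As 2 + 2 + 2 > 5 and
   b0 = l b1 + m b1', some x <> 0 lies in X(b1) ∩ X(b1'); its components along
   r0 and r1 are then the same in both planes, hence lie in X(b0), which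
   contradicts the regularity of r0 and r1 at b0. *)

From HB Require Import structures.
From mathcomp Require Import all_boot all_order all_algebra.
From mathcomp Require Import complex mxtens.
From mathcomp Require Import reals.
From mathcomp Require Import ring zify.
Set Implicit Arguments. Unset Strict Implicit. Unset Printing Implicit Defensive.
Import Order.TTheory GRing.Theory Num.Theory.
Local Open Scope ring_scope.

Local Notation idx := (@mxtens_index _ _).
Local Notation unidx := (@mxtens_unindex _ _).

Lemma ord2P (i : 'I_2) : i = 0 \/ i = 1.
Proof. by case: i => -[|[|//]] i_lt; [left|right]; apply: val_inj. Qed.

Lemma big_mxtens (R : nmodType) m n (f : 'I_(m * n) -> R) :
  \sum_(l < m * n) f l = \sum_(i < m) \sum_(j < n) f (idx (i, j)).
Proof.
rewrite pair_big /=; apply: (reindex (fun p : 'I_m * 'I_n => idx (p.1, p.2))).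
exists unidx => [[i j] _|l _] /=; first by rewrite mxtens_indexK.
exact: mxtens_unindexK.
Qed.

Section LinearAlgebra.
Variable F : fieldType.

Lemma mul_rV_col_mx n (D : 'rV[F]_(1 + 1)) (u v : 'rV[F]_n) :
  D *m col_mx u v = lsubmx D 0 0 *: u + rsubmx D 0 0 *: v.
Proof.
by rewrite -{1}[D]hsubmxK mul_row_col {1}[lsubmx D]mx11_scalar
  {1}[rsubmx D]mx11_scalar !mul_scalar_mx.
Qed.

Lemma row_free_col_mxP n (u v : 'rV[F]_n) :
  row_free (col_mx u v) <-> (forall s t, s *: u + t *: v = 0 -> s = 0 /\ t = 0).
Proof.
split=> [free_uv s t uv0 | indep_uv].
  have /eqP : row_mx s%:M t%:M == 0 :> 'rV_(1 + 1).
    by rewrite -(mulmx_free_eq0 _ free_uv) mul_row_col !mul_scalar_mx uv0.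
  rewrite -row_mx0 => /eq_row_mx[/matrixP/(_ 0 0) + /matrixP/(_ 0 0)].
  by rewrite !mxE /= mulr1n.
apply: inj_row_free => w; rewrite mul_rV_col_mx => /indep_uv[l0 r0].
rewrite -[w]hsubmxK [lsubmx w]mx11_scalar [rsubmx w]mx11_scalar l0 r0.
by rewrite !raddf0 row_mx0.
Qed.

Lemma row_free_col_mx_neq0 n (u v : 'rV[F]_n) :
  row_free (col_mx u v) -> (u != 0) && (v != 0).
Proof.
move=> /row_free_col_mxP indep_uv; apply/andP; split; apply/eqP=> uv0.
  have := indep_uv 1 0; rewrite uv0 scaler0 scale0r addr0.
  by move=> /(_ erefl)[/eqP]; rewrite oner_eq0.
have := indep_uv 0 1; rewrite uv0 scaler0 scale0r add0r.
by move=> /(_ erefl)[_ /eqP]; rewrite oner_eq0.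
Qed.

Lemma col_mx_span (u v w : 'rV[F]_2) :
  row_free (col_mx u v) -> exists s t, w = s *: u + t *: v.
Proof.
move=> free_uv; have /submxP[D ->] : (w <= col_mx u v)%MS by apply: submx_full.
by rewrite mul_rV_col_mx; do 2 eexists.
Qed.

Lemma capmx_neq0 m1 m2 n (A : 'M[F]_(m1, n)) (B : 'M[F]_(m2, n)) :
  (\rank (A + B)%MS < \rank A + \rank B)%N -> (A :&: B)%MS != 0.
Proof. by rewrite -mxrank_sum_cap -mxrank_eq0 -lt0n; lia. Qed.

End LinearAlgebra.

Lemma quadratic_ge0_eq0 (R : numFieldType) (a b : R) : 0 <= a -> 0 <= b ->
  (forall s, 0 <= s -> 0 <= s ^+ 2 * b - 2 * s * a) -> a = 0.
Proof.
move=> a_ge0 b_ge0 quad_ge0.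
have b1_gt0 : 0 < b + 1 by rewrite ltr_wpDl.
have b2_gt0 : 0 < b + 2 by rewrite ltr_wpDl.
have := quad_ge0 _ (divr_ge0 a_ge0 (ltW b1_gt0)).
have -> : (a / (b + 1)) ^+ 2 * b - 2 * (a / (b + 1)) * a =
    - (a ^+ 2 * (b + 2) / (b + 1) ^+ 2) by field; rewrite gt_eqF.
rewrite oppr_ge0 pmulr_lle0 ?invr_gt0 ?exprn_gt0 // pmulr_lle0 // => a2_le0.
by apply/eqP; rewrite -sqrf_eq0 eq_le a2_le0 exprn_ge0.
Qed.

Section Tensors.
Variable F : fieldType.

Definition tens2 m n (x : 'rV[F]_m) (z : 'rV[F]_n) : 'rV[F]_(m * n) :=
  \row_l (x 0 (unidx l).1 * z 0 (unidx l).2).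

Definition tens3 m n k (x : 'rV[F]_m) (y : 'rV[F]_n) (z : 'rV[F]_k) :=
  tens2 (tens2 x y) z.

Lemma tens2E m n (x : 'rV[F]_m) (z : 'rV[F]_n) i j :
  tens2 x z 0 (idx (i, j)) = x 0 i * z 0 j.
Proof. by rewrite mxE mxtens_indexK. Qed.

Lemma tens3E m n k (x : 'rV[F]_m) (y : 'rV[F]_n) (z : 'rV[F]_k) a b c :
  tens3 x y z 0 (idx (idx (a, b), c)) = x 0 a * y 0 b * z 0 c.
Proof. by rewrite !tens2E. Qed.

Fact tens2_is_semilinear m n (x : 'rV[F]_m) : semilinear (@tens2 m n x).
Proof. by split=> [a z|z z']; apply/rowP=> l; rewrite !mxE; ring. Qed.
HB.instance Definition _ m n (x : 'rV[F]_m) :=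
  GRing.isSemilinear.Build F 'rV_n 'rV_(m * n) _ (@tens2 m n x)
    (@tens2_is_semilinear m n x).

Lemma tens2_eq0 m n (x : 'rV[F]_m) (z : 'rV[F]_n) :
  x != 0 -> tens2 x z = 0 -> z = 0.
Proof.
move=> x_neq0 xz0; apply/rowP=> c; apply/eqP; rewrite mxE.
apply: contraNT x_neq0 => zc_neq0; apply/eqP/rowP=> a.
move/rowP/(_ (idx (a, c)))/eqP: xz0.
by rewrite tens2E !mxE mulf_eq0 (negPf zc_neq0) orbF => /eqP.
Qed.

Lemma tens2_indep m n (p0 p1 : 'rV[F]_m) (g h : 'rV[F]_n) :
  row_free (col_mx p0 p1) -> tens2 p0 g + tens2 p1 h = 0 -> g = 0 /\ h = 0.
Proof.
move=> /row_free_col_mxP indep_p gh0.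
suff gh_c c : g 0 c = 0 /\ h 0 c = 0.
  by split; apply/rowP=> c; rewrite mxE; case: (gh_c c).
apply: indep_p; apply/rowP=> a; move/rowP/(_ (idx (a, c))): gh0.
by rewrite !mxE !mxtens_indexK => <-; ring.
Qed.

Lemma tens2_pair_inj m n (r0 r1 : 'rV[F]_m) (g h g' h' : 'rV[F]_n) :
  row_free (col_mx r0 r1) ->
  tens2 r0 g + tens2 r1 h = tens2 r0 g' + tens2 r1 h' -> g = g' /\ h = h'.
Proof.
move=> indep_r e; have [] := tens2_indep (g := g - g') (h := h - h') indep_r.
  by rewrite !linearB addrACA -opprD e subrr.
by move=> /subr0_eq-> /subr0_eq->.
Qed.

Lemma row_free_tens2_pair m n (p0 p1 : 'rV[F]_m) (g h : 'rV[F]_n) :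
  row_free (col_mx p0 p1) -> g != 0 -> h != 0 ->
  row_free (col_mx (tens2 p0 g) (tens2 p1 h)).
Proof.
move=> indep_p g_neq0 h_neq0; apply/row_free_col_mxP=> s t.
rewrite -!linearZ => /(tens2_indep indep_p)[/eqP + /eqP].
by rewrite !scaler_eq0 (negPf g_neq0) (negPf h_neq0) !orbF => /eqP-> /eqP->.
Qed.

(* [u *m insB b] inserts [b] as the middle tensor factor of [u]. *)
Definition insB m n k (b : 'rV[F]_n) : 'M[F]_(m * k, m * n * k) :=
  \matrix_(i, j) (((unidx i).1 == (unidx (unidx j).1).1)%:R
     * b 0 (unidx (unidx j).1).2 * ((unidx i).2 == (unidx j).2)%:R).
Arguments insB {m n k} b.

Fact insB_is_semilinear m n k : semilinear (@insB m n k).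
Proof. by split=> [a b|b b']; apply/matrixP=> i j; rewrite !mxE; ring. Qed.
HB.instance Definition _ m n k :=
  GRing.isSemilinear.Build F 'rV_n 'M_(m * k, m * n * k) _ (@insB m n k)
    (@insB_is_semilinear m n k).

Lemma mul_insB m n k (u : 'rV[F]_(m * k)) (b : 'rV[F]_n) a j c :
  (u *m insB b) 0 (idx (idx (a, j), c)) = u 0 (idx (a, c)) * b 0 j.
Proof.
rewrite mxE big_mxtens (bigD1 a) //= [X in _ + X]big1 ?addr0; last first.
  move=> i /negPf ai; rewrite big1 // => l _.
  by rewrite mxE !mxtens_indexK /= ai mulr0n !mul0r mulr0.
rewrite (bigD1 c) //= big1 ?addr0; last first.
  by move=> l /negPf cl; rewrite mxE !mxtens_indexK /= eqxx cl mulr0n !mulr0.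
by rewrite mxE !mxtens_indexK /= !eqxx mulr1 mul1r.
Qed.

Lemma tens2_insB m n k (x : 'rV[F]_m) (b : 'rV[F]_n) (z : 'rV[F]_k) :
  tens2 x z *m insB b = tens3 x b z.
Proof.
apply/rowP=> l; case: (mxtens_indexP l) => ab c; case: (mxtens_indexP ab) => a j.
by rewrite mul_insB tens2E tens3E mulrAC.
Qed.

Lemma insB_inj m n k (b b' : 'rV[F]_n) (u u' : 'rV[F]_(m * k)) :
  row_free (col_mx b b') -> u *m insB b + u' *m insB b' = 0 -> u = 0 /\ u' = 0.
Proof.
move=> /row_free_col_mxP indep_b uu'0.
suff uu'_l l : u 0 l = 0 /\ u' 0 l = 0.
  by split; apply/rowP=> l; rewrite mxE; case: (uu'_l l).
case: (mxtens_indexP l) => a c; apply: indep_b; apply/rowP=> j.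
move/rowP/(_ (idx (idx (a, j), c))): uu'0.
by rewrite [X in X = _ -> _]mxE [X in _ = X -> _]mxE !mul_insB !mxE => <-.
Qed.

Lemma insB_row_free m n k (b : 'rV[F]_n) :
  b != 0 -> row_free (insB b : 'M_(m * k, m * n * k)).
Proof.
move=> b_neq0; apply: inj_row_free => u ub0; apply/rowP=> l; rewrite mxE.
case: (mxtens_indexP l) => a c; apply/eqP; apply: contraNT b_neq0 => uac_neq0.
apply/eqP/rowP=> j; move/rowP/(_ (idx (idx (a, j), c)))/eqP: ub0.
by rewrite mul_insB !mxE mulf_eq0 (negPf uac_neq0) => /eqP.
Qed.

End Tensors.

Arguments insB {F m n k} b.

Section SliceKernels.
Variables (F : fieldType) (rho : 'M[F]_(2 * 2 * 2)).
Implicit Types (a b c g h p r : 'rV[F]_2) (x : 'rV[F]_(2 * 2)).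

(* The state of C conditioned on outcomes [a] on A and [b] on B is singular. *)
Definition singular_at a b : Prop :=
  exists2 g : 'rV[F]_2, g != 0 & tens3 a b g *m rho = 0.

Definition kerAC b : 'M[F]_(2 * 2) := kermx (insB b *m rho).

Lemma sub_kerAC m (u : 'M[F]_(m, 2 * 2)) b :
  (u <= kerAC b)%MS = (u *m insB b *m rho == 0).
Proof. by rewrite sub_kermx mulmxA. Qed.

Lemma tens2_kerAC a b g : (tens2 a g <= kerAC b)%MS = (tens3 a b g *m rho == 0).
Proof. by rewrite sub_kerAC tens2_insB. Qed.

Lemma kerAC_lin c (c' : 'rV[F]_2) l m x :
  (x <= kerAC c)%MS -> (x <= kerAC c')%MS -> (x <= kerAC (l *: c + m *: c'))%MS.
Proof.
rewrite !sub_kerAC linearD !linearZ /= mulmxDr mulmxDl -!scalemxAr -!scalemxAl.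
by move=> /eqP-> /eqP->; rewrite !scaler0 addr0.
Qed.

Lemma singular_atZ a b l : singular_at a b -> singular_at a (l *: b).
Proof.
case=> g g_neq0 abg0; exists g => //.
by rewrite -tens2_insB linearZ /= -scalemxAr -scalemxAl tens2_insB abg0 scaler0.
Qed.

Lemma rank_kerAC_ge2 p0 p1 b : row_free (col_mx p0 p1) ->
  singular_at p0 b -> singular_at p1 b -> (2 <= \rank (kerAC b))%N.
Proof.
move=> indep_p [g g_neq0 p0g] [h h_neq0 p1h].
have GK : (col_mx (tens2 p0 g) (tens2 p1 h) <= kerAC b)%MS.
  by rewrite col_mx_sub !tens2_kerAC p0g p1h eqxx.
by have := mxrankS GK; rewrite (eqP (row_free_tens2_pair indep_p g_neq0 h_neq0)).
Qed.

Lemma rank_kerAC_le2 p b : p != 0 -> ~ singular_at p b -> (\rank (kerAC b) <= 2)%N.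
Proof.
move=> p_neq0 regular_pb; rewrite leqNgt; apply/negP => rank_gt2.
have free_p : row_free (lin1_mx (tens2 p) : 'M_(2, 2 * 2)).
  by apply: inj_row_free => g; rewrite mul_rV_lin1; apply: tens2_eq0.
have : (kerAC b :&: lin1_mx (tens2 p))%MS != 0.
  apply: capmx_neq0; rewrite (eqP free_p).
  by have := rank_leq_col (kerAC b + lin1_mx (tens2 p))%MS; lia.
case/rowV0Pn=> w; rewrite sub_capmx => /andP[wK /submxP[g def_w]] w_neq0.
rewrite def_w mul_rV_lin1 in wK w_neq0; apply: regular_pb; exists g.
  by apply: contraNneq w_neq0 => ->; rewrite linear0.
by apply/eqP; rewrite -tens2_kerAC.
Qed.

Lemma kerAC_split r0 r1 b x : row_free (col_mx r0 r1) ->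
    singular_at r0 b -> singular_at r1 b -> (\rank (kerAC b) <= 2)%N ->
    (x <= kerAC b)%MS ->
  exists g h, [/\ x = tens2 r0 g + tens2 r1 h,
    (tens2 r0 g <= kerAC b)%MS & (tens2 r1 h <= kerAC b)%MS].
Proof.
move=> indep_r [g g_neq0 r0g] [h h_neq0 r1h] rank_le2 xK.
set G := col_mx (tens2 r0 g) (tens2 r1 h).
have free_G : row_free G by apply: row_free_tens2_pair.
have GK : (G <= kerAC b)%MS by rewrite col_mx_sub !tens2_kerAC r0g r1h eqxx.
have KG : (kerAC b <= G)%MS.
  by rewrite -(mxrank_leqif_sup GK).2 eqn_leq (mxrankS GK) (eqP free_G) rank_le2.
have /submxP[D ->] := submx_trans xK KG.
exists (lsubmx D 0 0 *: g), (rsubmx D 0 0 *: h); rewrite !linearZ.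
by split; rewrite ?mul_rV_col_mx // scalemx_sub ?tens2_kerAC ?r0g ?r1h.
Qed.

Definition kerB b : 'M[F]_(2 * 2, 2 * 2 * 2) := kerAC b *m insB b.

Lemma kerB_sub b : (kerB b <= kermx rho)%MS.
Proof. by rewrite sub_kermx -mulmxA mulmx_ker. Qed.

Lemma rank_kerB b : b != 0 -> \rank (kerB b) = \rank (kerAC b).
Proof. by move=> b_neq0; rewrite mxrankMfree // insB_row_free. Qed.

Lemma kerB_disjoint c (c' : 'rV[F]_2) :
  row_free (col_mx c c') -> (kerB c :&: kerB c')%MS = 0.
Proof.
move=> indep_c; apply/eqP/rowV0P => w; rewrite sub_capmx.
case/andP=> /submxP[u ->] /submxP[u' /eqP]; rewrite !mulmxA -subr_eq0 -mulNmx.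
by case/eqP/(insB_inj indep_c) => -> _; rewrite mul0mx.
Qed.

Lemma kerAC_common c (c' : 'rV[F]_2) l m :
    \rank rho = 3%N -> row_free (col_mx c c') -> l != 0 -> m != 0 ->
    (5 < \rank (kerAC c) + \rank (kerAC c') + \rank (kerAC (l *: c + m *: c')))%N ->
  exists2 x : 'rV[F]_(2 * 2), x != 0 & (x <= kerAC c)%MS && (x <= kerAC c')%MS.
Proof.
move=> rank_rho indep_c l_neq0 m_neq0; set d := l *: c + m *: c'.
have /andP[c_neq0 c'_neq0] := row_free_col_mx_neq0 indep_c.
have d_neq0 : d != 0.
  apply/eqP => d0; have [l0 _] := (row_free_col_mxP c c').1 indep_c l m d0.
  by rewrite l0 eqxx in l_neq0.
move=> rank_gt5; have : ((kerB c + kerB c') :&: kerB d)%MS != 0.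
  apply: capmx_neq0; rewrite (mxrank_disjoint_sum (kerB_disjoint indep_c)).
  have : (\rank (kerB c + kerB c' + kerB d)%MS <= \rank (kermx rho))%N.
    by apply: mxrankS; rewrite !addsmx_sub !kerB_sub.
  by rewrite mxrank_ker rank_rho !rank_kerB //; lia.
case/rowV0Pn=> w; rewrite sub_capmx => /andP[/sub_addsmxP[[u u'] /= ->]].
case/submxP=> v e w_neq0; set y := v *m kerAC d.
have {}e : u *m kerAC c *m insB c + u' *m kerAC c' *m insB c' = y *m insB d.
  by rewrite -(mulmxA u) -(mulmxA u') -(mulmxA v) e.
have yd : y *m insB d = l *: (y *m insB c) + m *: (y *m insB c').
  by rewrite linearD !linearZ /= mulmxDr -!scalemxAr.
(* insB d = l insB c + m insB c', and insB c, insB c' are jointly injective *)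
have [uc u'c'] : u *m kerAC c = l *: y /\ u' *m kerAC c' = m *: y.
  have [] := insB_inj indep_c
    (u := l *: y - u *m kerAC c) (u' := m *: y - u' *m kerAC c').
    by rewrite !mulmxBl -!scalemxAl addrACA -opprD -yd e subrr.
  by move=> /eqP + /eqP; rewrite !subr_eq0 => /eqP<- /eqP<-.
exists y.
  rewrite (mulmxA u) (mulmxA u') e in w_neq0.
  by apply: contraNneq w_neq0 => ->; rewrite mul0mx.
apply/andP; split; first by rewrite -(scalerK l_neq0 y) -uc scalemx_sub ?submxMl.
by rewrite -(scalerK m_neq0 y) -u'c' scalemx_sub ?submxMl.
Qed.

Lemma no_singularity_pattern (p0 p1 r0 r1 b0 b1 b1' : 'rV[F]_2) :
    \rank rho = 3%N -> row_free (col_mx p0 p1) -> row_free (col_mx r0 r1) ->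
    row_free (col_mx b1 b1') ->
    singular_at p0 b0 -> singular_at p1 b0 ->
    ~ singular_at r0 b0 -> ~ singular_at r1 b0 ->
    singular_at r0 b1 -> singular_at r1 b1 ->
    singular_at r0 b1' -> singular_at r1 b1' ->
    ~ singular_at p0 b1 -> ~ singular_at p0 b1' ->
  False.
Proof.
move=> rank_rho indep_p indep_r indep_b p0b0 p1b0 r0b0 r1b0 r0b1 r1b1 r0b1' r1b1'
  p0b1 p0b1'.
have /andP[p0_neq0 _] := row_free_col_mx_neq0 indep_p.
have le2 := rank_kerAC_le2 p0_neq0 p0b1.
have le2' := rank_kerAC_le2 p0_neq0 p0b1'.
have [l [m def_b0]] := col_mx_span b0 indep_b.
have l_neq0 : l != 0.
  by apply/eqP=> l0; apply: r0b0; rewrite def_b0 l0 scale0r add0r; apply: singular_atZ.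
have m_neq0 : m != 0.
  by apply/eqP=> m0; apply: r0b0; rewrite def_b0 m0 scale0r addr0; apply: singular_atZ.
have ranks :
    (5 < \rank (kerAC b1) + \rank (kerAC b1') + \rank (kerAC (l *: b1 + m *: b1')))%N.
  rewrite -def_b0; have := rank_kerAC_ge2 indep_p p0b0 p1b0.
  have := rank_kerAC_ge2 indep_r r0b1 r1b1.
  by have := rank_kerAC_ge2 indep_r r0b1' r1b1'; lia.
have [x x_neq0 /andP[xK xK']] := kerAC_common rank_rho indep_b l_neq0 m_neq0 ranks.
have regular_b0 r g : ~ singular_at r b0 ->
    (tens2 r g <= kerAC b1)%MS -> (tens2 r g <= kerAC b1')%MS -> g = 0.
  move=> rb0 rg rg'; apply/eqP/negPn/negP => g_neq0; apply: rb0; exists g => //.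
  by apply/eqP; rewrite -tens2_kerAC def_b0 kerAC_lin.
have [g [h [def_x g1 h1]]] := kerAC_split indep_r r0b1 r1b1 le2 xK.
have [g' [h' [def_x' g1' h1']]] := kerAC_split indep_r r0b1' r1b1' le2' xK'.
have [eg eh] := tens2_pair_inj indep_r (etrans (esym def_x) def_x').
rewrite -{}eg in g1'; rewrite -{}eh in h1'.
move: x_neq0; rewrite def_x (regular_b0 _ _ r0b0 g1 g1') (regular_b0 _ _ r1b0 h1 h1').
by rewrite !linear0 addr0 eqxx.
Qed.

End SliceKernels.

Section Adjoint.
Variable C : numClosedFieldType.

Lemma adjmxE m n (A : 'M[C]_(m, n)) i j : adjmx A i j = (A j i)^*.
Proof. by rewrite !mxE. Qed.

Lemma adjmxK m n (A : 'M[C]_(m, n)) : adjmx (adjmx A) = A.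
Proof. by apply/matrixP=> i j; rewrite !adjmxE conjCK. Qed.

Lemma adjmxM m n p (A : 'M[C]_(m, n)) (B : 'M[C]_(n, p)) :
  adjmx (A *m B) = adjmx B *m adjmx A.
Proof. by rewrite /adjmx map_mxM trmx_mul. Qed.

Lemma adjmxB m n (A B : 'M[C]_(m, n)) : adjmx (A - B) = adjmx A - adjmx B.
Proof. by apply/matrixP=> i j; rewrite !mxE rmorphB. Qed.

Lemma adjmxZ m n a (A : 'M[C]_(m, n)) : adjmx (a *: A) = a^* *: adjmx A.
Proof. by apply/matrixP=> i j; rewrite !mxE rmorphM. Qed.

Lemma mul_adjmx_ge0 n (z : 'rV[C]_n) : 0 <= (z *m adjmx z) 0 0.
Proof. by rewrite mxE; apply: sumr_ge0 => i _; rewrite adjmxE mul_conjC_ge0. Qed.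

Lemma mul_adjmx_eq0 n (z : 'rV[C]_n) : (z *m adjmx z) 0 0 = 0 -> z = 0.
Proof.
rewrite mxE => /psumr_eq0P z0; apply/rowP=> i; rewrite mxE; apply/eqP.
by rewrite -mul_conjC_eq0 -adjmxE z0 // => j _; rewrite adjmxE mul_conjC_ge0.
Qed.

Lemma psd_form_eq0 n (rho : 'M[C]_n) (v : 'rV[C]_n) :
  psd rho -> (v *m rho *m adjmx v) 0 0 = 0 -> v *m rho = 0.
Proof.
case=> herm form_ge0 v0; set z := v *m rho.
have ge0 (x : 'rV[C]_n) : 0 <= (x *m rho *m adjmx x) 0 0.
  by have := form_ge0 (adjmx x); rewrite adjmxK.
have zv : (z *m rho *m adjmx v) 0 0 = (z *m adjmx z) 0 0.
  by rewrite /z adjmxM herm -!mulmxA.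
apply/mul_adjmx_eq0/(quadratic_ge0_eq0 (mul_adjmx_ge0 z) (ge0 z)) => s s_ge0.
suff -> : s ^+ 2 * (z *m rho *m adjmx z) 0 0 - 2 * s * (z *m adjmx z) 0 0 =
    ((v - s *: z) *m rho *m adjmx (v - s *: z)) 0 0 by apply: ge0.
rewrite -[RHS]trace_mx11 adjmxB adjmxZ !mulmxBl !mulmxBr -!scalemxAl -!scalemxAr.
by rewrite !raddfB /= !mxtraceZ !trace_mx11 v0 zv geC0_conj //; ring.
Qed.

Lemma hermitian_rank1E n (P : 'M[C]_n) : adjmx P = P -> \rank P = 1%N ->
  exists2 s, s != 0 & P = s *: (adjmx (nz_row P) *m nz_row P).
Proof.
move=> herm rank1; set u := nz_row P.
have P_neq0 : P != 0 by rewrite -mxrank_eq0 rank1.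
have u_neq0 : u != 0 by rewrite nz_row_eq0.
have /submxP[D defP] : (P <= u)%MS.
  by rewrite -(mxrank_leqif_sup (nz_row_sub P)).2 rank_rV u_neq0 rank1.
set a := (u *m adjmx u) 0 0; set b := (adjmx D *m adjmx u) 0 0.
have a_neq0 : a != 0 by apply: contraNneq u_neq0 => /mul_adjmx_eq0->.
(* P = D u is hermitian, which forces D to be proportional to u^* *)
have : D *m (u *m adjmx u) = adjmx u *m (adjmx D *m adjmx u).
  by rewrite [LHS]mulmxA -defP -{1}herm defP adjmxM -mulmxA.
rewrite [u *m _]mx11_scalar [adjmx D *m _]mx11_scalar !mul_mx_scalar -/a -/b.
move=> e; have defD : D = (a^-1 * b) *: adjmx u.
  by rewrite -scalerA -e scalerA mulVf // scale1r.
exists (a^-1 * b); last by rewrite defP defD scalemxAl.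
by apply: contraNneq P_neq0 => s0; rewrite defP defD s0 scale0r mul0mx.
Qed.

End Adjoint.

Section Assemblage.
Variable C : numClosedFieldType.
Implicit Types (u v g : 'rV[C]_2) (rho : 'M[C]_(2 * 2 * 2)).

Local Notation dyad s u := (s *: (adjmx u *m u)).
Local Notation condAB rho P Q := (ptraceAB (((P *t Q) *t 1%:M) *m rho)).

Lemma condABE (P Q : 'M[C]_2) rho i j :
  condAB rho P Q i j =
  \sum_(a < 2) \sum_(b < 2) \sum_(a' < 2) \sum_(b' < 2)
     P a a' * Q b b' * rho (idx (idx (a', b'), i)) (idx (idx (a, b), j)).
Proof.
rewrite mxE big_mxtens; apply: eq_bigr => a _; apply: eq_bigr => b _.
rewrite mxE !big_mxtens; apply: eq_bigr => a' _; apply: eq_bigr => b' _.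
rewrite (bigD1 i) //= big1 ?addr0; first by rewrite !tensmxE mxE eqxx mulr1.
by move=> i' /negPf ii'; rewrite !tensmxE mxE eq_sym ii' mulr0n mulr0 mul0r.
Qed.

Lemma mul_tens3E u v g rho l :
  (tens3 u v g *m rho) 0 l = \sum_(a < 2) \sum_(b < 2) \sum_(c < 2)
     u 0 a * v 0 b * g 0 c * rho (idx (idx (a, b), c)) l.
Proof.
by rewrite mxE !big_mxtens; do 3 (apply: eq_bigr => ? _); rewrite tens3E.
Qed.

Lemma mul_condAB_dyad u v g s t rho j :
  (g *m condAB rho (dyad s u) (dyad t v)) 0 j =
  s * t * \sum_(a < 2) \sum_(b < 2)
    ((u 0 a)^* * (v 0 b)^* * (tens3 u v g *m rho) 0 (idx (idx (a, b), j))).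
Proof.
have dyadE (w : 'rV[C]_2) r (a a' : 'I_2) :
    dyad r w a a' = r * ((w 0 a)^* * w 0 a').
  by rewrite mxE mxE big_ord1 adjmxE.
rewrite mxE !big_ord_recr !big_ord0 /= !condABE !mul_tens3E.
by rewrite !big_ord_recr !big_ord0 /= !dyadE; ring.
Qed.

Lemma form_condAB_dyad u v g s t rho :
  (g *m condAB rho (dyad s u) (dyad t v) *m adjmx g) 0 0 =
  s * t * (tens3 u v g *m rho *m adjmx (tens3 u v g)) 0 0.
Proof.
rewrite mxE !big_ord_recr big_ord0 /= !mul_condAB_dyad.
rewrite [in RHS]mxE !big_mxtens !big_ord_recr !big_ord0 /= !adjmxE !tens3E !rmorphM.
by ring.
Qed.

Lemma condAB_dyad_ker u v g s t rho : tens3 u v g *m rho = 0 ->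
  g *m condAB rho (dyad s u) (dyad t v) = 0.
Proof.
move=> w0; apply/rowP=> j; rewrite mul_condAB_dyad w0 [RHS]mxE.
by rewrite big1 ?mulr0 // => a _; rewrite big1 // => b _; rewrite mxE mulr0.
Qed.

Lemma ker_condAB_dyad u v g s t rho : psd rho -> s != 0 -> t != 0 ->
  g *m condAB rho (dyad s u) (dyad t v) = 0 ->
  tens3 u v g *m rho = 0.
Proof.
move=> psd_rho s_neq0 t_neq0 g0; apply: (psd_form_eq0 psd_rho).
apply: (mulfI (mulf_neq0 s_neq0 t_neq0)).
by rewrite mulr0 -form_condAB_dyad g0 mul0mx mxE.
Qed.

Lemma rank_one_projE (P : 'M[C]_2) : rank_one_proj P ->
  exists2 s, s != 0 & P = dyad s (nz_row P).
Proof. by case=> _ [herm rank1]; apply: hermitian_rank1E. Qed.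

Lemma rank1_assemblage_singular rho P Q a b x y :
    psd rho -> rank_one_proj (P a x) -> rank_one_proj (Q b y) ->
    \rank (assemblage rho P Q a b x y) = 1%N ->
  singular_at rho (nz_row (P a x)) (nz_row (Q b y)).
Proof.
move=> psd_rho /rank_one_projE[s s_neq0 defP] /rank_one_projE[t t_neq0 defQ] rank1.
set S := assemblage rho P Q a b x y.
exists (nz_row (kermx S)); first by rewrite nz_row_eq0 -mxrank_eq0 mxrank_ker rank1.
apply: ker_condAB_dyad psd_rho s_neq0 t_neq0 _.
by rewrite -defP -defQ; apply/sub_kermxP/nz_row_sub.
Qed.

Lemma rank2_assemblage_regular rho P Q a b x y :
    rank_one_proj (P a x) -> rank_one_proj (Q b y) ->
    \rank (assemblage rho P Q a b x y) = 2%N ->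
  ~ singular_at rho (nz_row (P a x)) (nz_row (Q b y)).
Proof.
move=> /rank_one_projE[s _ defP] /rank_one_projE[t _ defQ] rank2 [g g_neq0 w0].
have free_S : row_free (assemblage rho P Q a b x y) by rewrite /row_free rank2.
have := condAB_dyad_ker s t w0; rewrite -defP -defQ => gS.
by rewrite -(mulmx_free_eq0 _ free_S) gS eqxx in g_neq0.
Qed.

Lemma rank_one_proj_scale (P P' : 'M[C]_2) k :
  rank_one_proj P -> rank_one_proj P' -> P = k *: P' -> P = P'.
Proof.
move=> [PP [_ rankP]] [P'P' [_ rankP']] defP.
have P'_neq0 : P' != 0 by rewrite -mxrank_eq0 rankP'.
have /eqP : (k * k - k) *: P' = 0.
  by rewrite scalerBl -scalerA -{1}P'P' scalemxAl scalemxAr -defP PP defP subrr.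
rewrite scaler_eq0 (negPf P'_neq0) orbF => kk.
have /eqP : k * (k - 1) = 0 by rewrite mulrBr mulr1; apply/eqP.
rewrite mulf_eq0 subr_eq0 => /orP[/eqP k0|/eqP k1]; last by rewrite defP k1 scale1r.
by move: rankP; rewrite defP k0 scale0r mxrank0.
Qed.

Lemma row_free_rank_one_proj (P P' : 'M[C]_2) :
  rank_one_proj P -> rank_one_proj P' -> P != P' ->
  row_free (col_mx (nz_row P) (nz_row P')).
Proof.
move=> projP projP' neqP.
have [s s_neq0 defP] := rank_one_projE projP.
have [s' s'_neq0 defP'] := rank_one_projE projP'.
set u := nz_row P in defP *; set u' := nz_row P' in defP' *.
have u'_neq0 : u' != 0.
  by rewrite nz_row_eq0 -mxrank_eq0; case: projP' => _ [_ ->].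
apply/row_free_col_mxP=> a b /eqP; rewrite addr_eq0 => /eqP au.
have a0 : a = 0.
  apply/eqP/negPn/negP => a_neq0; move/eqP: neqP; apply.
  have defu : u = (- b / a) *: u'.
    by rewrite -[u](scalerK a_neq0) au -scaleNr scalerA mulrC.
  apply: (rank_one_proj_scale projP projP' (k := s * ((- b / a)^* * (- b / a)) / s')).
  rewrite defP {1}defP' defu adjmxZ -scalemxAl -scalemxAr !scalerA.
  by congr (_ *: _); rewrite divfK // mulrA.
split=> //; move/eqP: au; rewrite a0 scale0r eq_sym oppr_eq0 scaler_eq0.
by rewrite (negPf u'_neq0) orbF => /eqP.
Qed.

Lemma nontrivial_pm_proj (M : 'I_2 -> 'M[C]_2) i :
  nontrivial_pm M -> rank_one_proj (M i).
Proof. by case=> M0 [M1 _]; case: (ord2P i) => ->. Qed.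

Lemma nontrivial_pm_neq (M : 'I_2 -> 'M[C]_2) : nontrivial_pm M -> M 0 != M 1.
Proof.
case=> _ [[_ [_ rank1]] sumM]; apply/eqP => M01.
have := mxrankS (addmx_sub (submx_refl (M 1)) (submx_refl (M 1))).
by rewrite -{1}M01 sumM mxrank1 rank1.
Qed.

Lemma row_free_nontrivial_pm (M : 'I_2 -> 'M[C]_2) :
  nontrivial_pm M -> row_free (col_mx (nz_row (M 0)) (nz_row (M 1))).
Proof.
move=> pmM; apply: row_free_rank_one_proj; rewrite ?nontrivial_pm_neq //;
  exact: nontrivial_pm_proj.
Qed.

End Assemblage.

Theorem lemma7 (R : realType) (rho : 'M[R[i]]_(2 * 2 * 2))
  (P Q : 'I_2 -> 'I_2 -> 'M[R[i]]_2) :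
  density_matrix rho -> \rank rho = 3%N ->
  nontrivial_pm (P ^~ 0) -> nontrivial_pm (P ^~ 1) ->
  nontrivial_pm (Q ^~ 0) -> nontrivial_pm (Q ^~ 1) ->
  different_up_to_relabeling Q ->
  let sigma := assemblage rho P Q in
  ~ ((forall a b : 'I_2,
        \rank (sigma a b 0 0) = 1%N /\ \rank (sigma a b 1 1) = 1%N /\
        \rank (sigma a b 0 1) = 2%N /\ \rank (sigma a b 1 0) = 2%N))
  /\
  ~ ((forall a y : 'I_2,
        \rank (sigma a 0 0 y) = 1%N /\ \rank (sigma a 1 0 y) = 2%N /\
        \rank (sigma a 0 1 y) = 2%N /\ \rank (sigma a 1 1 y) = 1%N)).
Proof.
move=> [psd_rho _] rank_rho pmP0 pmP1 pmQ0 pmQ1 [Q00_neq_Q01 _] sigma.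
have projP a x : rank_one_proj (P a x).
  by case: (ord2P x) => ->;
    [exact: nontrivial_pm_proj pmP0 | exact: nontrivial_pm_proj pmP1].
have projQ b y : rank_one_proj (Q b y).
  by case: (ord2P y) => ->;
    [exact: nontrivial_pm_proj pmQ0 | exact: nontrivial_pm_proj pmQ1].
have sing a b x y := rank1_assemblage_singular psd_rho (projP a x) (projQ b y).
have reg a b x y := rank2_assemblage_regular (rho := rho) (projP a x) (projQ b y).
have indepP0 := row_free_nontrivial_pm pmP0.
have indepP1 := row_free_nontrivial_pm pmP1.
split=> H.
  have s00 a b := sing a b 0 0 (H a b).1; have s11 a b := sing a b 1 1 (H a b).2.1.
  have r01 a b := reg a b 0 1 (H a b).2.2.1; have r10 a b := reg a b 1 0 (H a b).2.2.2.
  exact: (no_singularity_pattern rank_rho indepP0 indepP1 (row_free_nontrivial_pm pmQ1)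
    (s00 0 0) (s00 1 0) (r10 0 0) (r10 1 0) (s11 0 0) (s11 1 0) (s11 0 1) (s11 1 1)
    (r01 0 0) (r01 0 1)).
have indepQ1 : row_free (col_mx (nz_row (Q 1 0)) (nz_row (Q 1 1))).
  apply: row_free_rank_one_proj (projQ 1 0) (projQ 1 1) _.
  apply/eqP=> Q10_Q11; apply: Q00_neq_Q01; apply: (addIr (Q 1 0)).
  by case: pmQ0 => _ [_ ->]; case: pmQ1 => _ [_ <-]; rewrite Q10_Q11.
have s0 a y := sing a 0 0 y (H a y).1; have r1 a y := reg a 1 0 y (H a y).2.1.
have r0 a y := reg a 0 1 y (H a y).2.2.1; have s1 a y := sing a 1 1 y (H a y).2.2.2.
exact: (no_singularity_pattern rank_rho indepP0 indepP1 indepQ1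
  (s0 0 0) (s0 1 0) (r0 0 0) (r0 1 0) (s1 0 0) (s1 1 0) (s1 0 1) (s1 1 1)
  (r1 0 0) (r1 0 1)).
Qed.
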